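(* Let $(X,d,\mu)$, $p$, $\underline{Q}_\mu$ be as in the context. Fix $\underline{\theta}\in[0,\min\{p,\underline{Q}_\mu\})$, $\theta\in[\underline{\theta},p)$, an integer $N\ge2$, numbers $0\le\theta_1<\dots<\theta_N=\underline{\theta}$, closed sets $S^i\in\mathcal{ADR}_{\theta_i}(X)$, and $\mathfrak m_k:=\sum_{i=1}^N2^{k(\theta-\theta_i)}\mathcal H_{\theta_i}\lfloor_{S^i}$, $k\in\mathbb N_0$. Then for each $c\ge1$ there is a constant $C>0$ such that the following holds. If $k\in\mathbb N_0$, $B=cB_k(\underline x)$ with $\underline x\in X$, and $\mathcal I\subset\{1,\dots,N\}$ are such that for each $i\in\mathcal I$ there is $x_i\in S^i$ with $B_k(x_i)\subset B$, and $B\cap S^j=\emptyset$ for all $j\in\{1,\dots,N\}\setminus\mathcal I$, then for every $f\in L^{loc}_1(\mathfrak m_0)$, $$\mathcal E_{\mathfrak m_k}(f,B)\le C\Big(\sum_{i\in\mathcal I}\mathcal E_{\mathcal H_{\theta_i}\lfloor_{S^i}}(f,B)+\sum_{\substack{i,j\in\mathcal I\\ i\ne j}}\mathrm{Av}_{B\cap S^i,\mathcal H_{\theta_i}}\mathrm{Av}_{B\cap S^j,\mathcal H_{\theta_j}}|f(y')-f(z')|\Big).$$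
   Context: Standing setting: $(X,d)$ complete separable metric space, $\mu$ a Borel regular locally finite outer measure, $\operatorname{supp}\mu=X$, uniformly locally doubling (for every $R>0$, $\sup_{r\in(0,R]}\sup_x\mu(B_{2r}(x))/\mu(B_r(x))<\infty$). Balls are closed, $B_r(x)=\{y:d(x,y)\le r\}$, $cB_r(x)=B_{cr}(x)$, $B_k(x)=B_{2^{-k}}(x)$. A fixed $p\in(1,\infty)$; $X$ supports a weak local $(1,p)$-Poincaré inequality (for every $R>0$ there are $C,\lambda\ge1$ with $\inf_c\frac{1}{\mu(B_r(x))}\int_{B_r(x)}|f-c|d\mu\le Cr(\frac{1}{\mu(B_{\lambda r}(x))}\int_{B_{\lambda r}(x)}(\operatorname{lip}f)^pd\mu)^{1/p}$ for Lipschitz $f$, $x\in X$, $r\in(0,R]$). $\underline{Q}_\mu$ is the infimum of $Q>0$ such that for every $R>0$ there is $C$ with $(r_{B'}/r_B)^Q\le C\mu(B')/\mu(B)$ for balls $B'\subset B$, $0<r_{B'}\le r_B\le R$. Notation: $\mathrm{Av}_{G,\mathfrak m}(g)=\mathfrak m(G)^{-1}\int_Gg\,d\mathfrak m$ if $\mathfrak m(G)>0$, else $0$ (the double mean in the claim is over $y'\in B\cap S^i$ and $z'\in B\cap S^j$); $\mathcal E_{\mathfrak m}(g,G):=\inf_{c\in\mathbb R}\mathrm{Av}_{G,\mathfrak m}(|g-c|)$; $\mathfrak m\lfloor_S(E)=\mathfrak m(E\cap S)$. $\mathcal H_{\vartheta,\delta}(E):=\inf\{\sum\mu(B_{r_i}(x_i))r_i^{-\vartheta}:E\subset\bigcup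 B_{r_i}(x_i),0<r_i<\delta\}$, $\mathcal H_\vartheta=\lim_{\delta\to0}\mathcal H_{\vartheta,\delta}$. $\mathcal{ADR}_\vartheta(X)$: closed $S'$ with $\varkappa_1\mu(B_r(x))r^{-\vartheta}\le\mathcal H_\vartheta(B_r(x)\cap S')\le\varkappa_2\mu(B_r(x))r^{-\vartheta}$ for $x\in S'$, $r\in(0,1]$. *)

From HB Require Import structures.
From mathcomp Require Import all_boot all_order all_algebra.
From mathcomp Require Import all_classical all_reals all_analysis.
Set Implicit Arguments. Unset Strict Implicit. Unset Printing Implicit Defensive.
Import Order.TTheory GRing.Theory Num.Theory.
Import numFieldNormedType.Exports.
Local Open Scope classical_set_scope.
Local Open Scope ring_scope.

Section Defs.
Context {R : realType} {dsp : measure_display} {T : measurableType dsp}.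
Variable dist : T -> T -> R.

Definition cball (x : T) (r : R) : set T := [set y | dist x y <= r].

Definition is_metric : Prop :=
  [/\ (forall x y, 0 <= dist x y), (forall x y, dist x y = 0 <-> x = y),
      (forall x y, dist x y = dist y x) &
      (forall x y z, dist x z <= dist x y + dist y z)].

Definition complete_metric : Prop :=
  forall u : nat -> T,
    (forall e, 0 < e -> exists n0, forall m n, (n0 <= m)%N -> (n0 <= n)%N ->
        dist (u m) (u n) < e) ->
    exists l, forall e, 0 < e -> exists n0, forall n, (n0 <= n)%N -> dist (u n) l < e.

Definition separable_metric : Prop :=
  exists s : nat -> T, forall x e, 0 < e -> exists n, dist x (s n) < e.

Definition d_open (A : set T) : Prop :=
  forall x, A x -> exists2 e, 0 < e & [set y | dist x y < e] `<=` A.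

Definition d_closed (A : set T) : Prop :=
  forall x, (forall e, 0 < e -> exists y, A y /\ dist x y < e) -> A x.

Definition borel_structure : Prop :=
  forall A : set T, measurable A <-> <<s [set B | d_open B] >> A.

Lemma cball_def x r y : cball x r y = (dist x y <= r). Proof. by []. Qed.

Variable mu : {measure set T -> \bar R}.

Definition locally_finite : Prop :=
  forall x, exists2 r, 0 < r & (mu (cball x r) < +oo)%E.

Definition full_support : Prop :=
  forall x r, 0 < r -> (0 < mu (cball x r))%E.

Definition unif_loc_doubling : Prop :=
  forall Rr, 0 < Rr -> exists D : R, forall x r, 0 < r -> r <= Rr ->
    (mu (cball x (2 * r)) <= D%:E * mu (cball x r))%E.

End Defs.

Definition Av {R : realType} {dsp : measure_display} {T : measurableType dsp}
  (m : {measure set T -> \bar R}) (G : set T) (g : T -> \bar R) : \bar R :=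
  if (0 < m G)%E then (((fine (m G))^-1)%:E * \int[m]_(x in G) g x)%E else 0%E.

Definition Eosc {R : realType} {dsp : measure_display} {T : measurableType dsp}
  (m : {measure set T -> \bar R}) (g : T -> R) (G : set T) : \bar R :=
  ereal_inf [set Av m G (fun x => (`|g x - c|)%:E) | c in [set: R]].

Section Defs2.
Context {R : realType} {dsp : measure_display} {T : measurableType dsp}.
Variable dist : T -> T -> R.

Definition lipschitz (f : T -> R) : Prop :=
  exists L : R, forall x y, `|f x - f y| <= L * dist x y.

Definition lip (f : T -> R) (x : T) : \bar R :=
  ereal_sup [set ereal_inf [set ereal_sup
      [set (`|f y - f x| / r)%:E | y in cball dist x r]
    | r in [set r | 0 < r < delta]] | delta in [set delta | 0 < delta]].

Variable mu : {measure set T -> \bar R}.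

Definition local_poincare (p : R) : Prop :=
  forall Rr, 0 < Rr -> exists C lam : R, [/\ 1 <= C, 1 <= lam &
    forall f, lipschitz f -> forall x r, 0 < r -> r <= Rr ->
      (Eosc mu f (cball dist x r) <=
       (C * r)%:E * poweR (Av mu (cball dist x (lam * r)) (fun y => poweR (lip f y) p))
                          p^-1)%E].

Definition lower_dims : set R :=
  [set Q | 0 < Q /\ forall Rr, 0 < Rr -> exists C : R,
    forall x x' r r', 0 < r' -> r' <= r -> r <= Rr ->
      cball dist x' r' `<=` cball dist x r ->
      (((r' / r) `^ Q)%:E * mu (cball dist x r) <= C%:E * mu (cball dist x' r'))%E].

Definition Qlow : \bar R := ereal_inf [set Q%:E | Q in lower_dims].

Definition Hdelta (th delta : R) (E : set T) : \bar R :=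
  ereal_inf [set s | exists (I : set nat) (x : nat -> T) (r : nat -> R),
    [/\ (forall i, I i -> 0 < r i < delta),
        E `<=` \bigcup_(i in I) cball dist (x i) (r i) &
        s = (\sum_(i <oo | i \in I)
               (mu (cball dist (x i) (r i)) * ((r i) `^ (- th))%:E))%E]].

(* H_theta = lim_{delta -> 0} H_{theta,delta}  (a nondecreasing limit, i.e. a sup) *)
Definition Haus (th : R) (E : set T) : \bar R :=
  ereal_sup [set Hdelta th delta E | delta in [set delta | 0 < delta]].

Definition ADR (th : R) (S : set T) : Prop :=
  d_closed dist S /\ exists k1 k2 : R, [/\ 0 < k1, 0 < k2 &
    forall x r, S x -> 0 < r -> r <= 1 ->
      ((k1 * r `^ (- th))%:E * mu (cball dist x r) <= Haus th (cball dist x r `&` S))%E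
   /\ (Haus th (cball dist x r `&` S) <= (k2 * r `^ (- th))%:E * mu (cball dist x r))%E].

End Defs2.

Definition loc_integrable {R : realType} {dsp : measure_display} {T : measurableType dsp}
  (dist : T -> T -> R) (m : {measure set T -> \bar R}) (f : T -> R) : Prop :=
  measurable_fun [set: T] f /\
  forall x, exists2 r, 0 < r & m.-integrable (cball dist x r) (EFin \o f).

From HB Require Import structures.
From mathcomp Require Import all_boot all_order all_algebra.
From mathcomp Require Import all_classical all_reals all_analysis.
From mathcomp Require Import measurable_realfun lra.
Set Implicit Arguments. Unset Strict Implicit. Unset Printing Implicit Defensive.
Import Order.TTheory GRing.Theory Num.Theory.
Import numFieldNormedType.Exports.
Local Open Scope classical_set_scope.
Local Open Scope ring_scope.

(* Write m_k = sum_i w_i nu_i with w_i > 0.  Since w_i nu_i(B) <= m_k(B), for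
   every point z we get E_{m_k}(f,B) <= Av_{B,m_k}|f - f(z)|
   <= sum_i Av_{B,nu_i}|f - f(z)|.  Averaging this in z over B with respect to
   a stratum nu_{i0} that charges B, the i0 term becomes the double mean of
   |f(y) - f(z)| over B, which is at most 2 E_{nu_{i0}}(f,B), the terms of the
   other strata in I become the cross double means, and the strata outside I
   do not charge B.  Hence C = 2 works, whatever c is. *)

Section metric_measurable.
Context {R : realType} {dsp : measure_display} {T : measurableType dsp}.
Variable dist : T -> T -> R.

Lemma d_closed_measurable (A : set T) :
  borel_structure dist -> d_closed dist A -> measurable A.
Proof.
move=> borel closedA; rewrite -[A]setCK; apply: measurableC.
apply/borel; apply: sub_sigma_algebra => x nAx.
have /existsNP[e /not_implyP[e0 /forallNP farA]] :
    ~ (forall e, 0 < e -> exists y, A y /\ dist x y < e) by move=> /closedA.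
by exists e => // y /= xy Ay; apply: (farA y).
Qed.

Lemma cball_d_closed x r : is_metric dist -> d_closed dist (cball dist x r).
Proof.
move=> [_ _ dsym dtri] y near_y; rewrite /cball /= leNgt; apply/negP => ry.
have [z [zr yz]] := near_y (dist x y - r) (ltac:(by rewrite subr_gt0)).
by move: zr; rewrite cball_def; have := dtri x z y; rewrite (dsym z y); lra.
Qed.

Lemma Haus_set0_le0 (mu : {measure set T -> \bar R}) th (x0 : T) :
  (Haus dist mu th set0 <= 0)%E.
Proof.
apply: ge_ereal_sup => _ [delta /= delta0 <-].
apply: ereal_inf_lbound; exists set0, (fun _ => x0), (fun _ => delta / 2); split.
- by move=> i [].
- by [].
- by rewrite eseries_pred0 // => i /=; apply/negbTE/negP; rewrite in_setE.
Qed.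

End metric_measurable.

Section average.
Context {R : realType} {dsp : measure_display} {T : measurableType dsp}.
Variable mu : {measure set T -> \bar R}.
Implicit Types (D S : set T) (g h : T -> \bar R).
Local Open Scope ereal_scope.

Lemma Av_ge0 D g : (forall x, D x -> 0 <= g x) -> 0 <= Av mu D g.
Proof.
move=> g0; rewrite /Av; case: ifP => // _; apply: mule_ge0; last exact: integral_ge0.
by rewrite lee_fin invr_ge0 fine_ge0 // measure_ge0.
Qed.

(* [fine +oo = 0], so the average over a set of infinite measure is [0]. *)
Lemma Av_eq0 D g : ~~ (0 < mu D < +oo) -> Av mu D g = 0.
Proof.
rewrite /Av; case: ifP => //= D0; rewrite ltey negbK => /eqP ->.
by rewrite invr0 mul0e.
Qed.

Lemma Av_le D g h : measurable D -> measurable_fun D g -> measurable_fun D h ->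
  (forall x, D x -> 0 <= g x) -> (forall x, D x -> g x <= h x) ->
  Av mu D g <= Av mu D h.
Proof.
move=> mD mg mh g0 gh; rewrite /Av; case: ifP => // _.
apply: lee_wpmul2l; first by rewrite lee_fin invr_ge0 fine_ge0 // measure_ge0.
exact: ge0_le_integral.
Qed.

Lemma Av_cst D K : measurable D -> 0 < mu D < +oo -> Av mu D (cst K) = K.
Proof.
move=> mD /andP[D0 Doo]; rewrite /Av D0 integral_cst //; set M := fine (mu D).
have MuE : M%:E = mu D by rewrite fineK // ge0_fin_numE ?measure_ge0.
by rewrite -MuE muleCA -EFinM mulVf ?mule1 // gt_eqF // -lte_fin MuE.
Qed.

Lemma AvD D g h : measurable D -> measurable_fun D g -> measurable_fun D h ->
  (forall x, D x -> 0 <= g x) -> (forall x, D x -> 0 <= h x) ->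
  Av mu D (g \+ h) = Av mu D g + Av mu D h.
Proof.
move=> mD mg mh g0 h0; rewrite /Av; case: ifP => _; last by rewrite adde0.
by rewrite ge0_integralD // ge0_muleDr // integral_ge0.
Qed.

Lemma Av_sum n D (g : 'I_n -> T -> \bar R) : measurable D ->
  (forall i, measurable_fun D (g i)) -> (forall i x, D x -> 0 <= g i x) ->
  Av mu D (fun x => \sum_(i < n) g i x) = \sum_(i < n) Av mu D (g i).
Proof.
move=> mD mg g0; rewrite /Av; case: ifP => _; last by rewrite big1.
rewrite ge0_integral_sum // ge0_sume_distrr // => i _.
by apply: integral_ge0 => x /g0.
Qed.

Lemma Av_setI_null D S g : measurable D -> measurable S ->
  mu (D `\` S) = 0 -> measurable_fun D g -> Av mu (D `&` S) g = Av mu D g.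
Proof.
move=> mD mS DS0 mg.
have mDS : measurable (D `\` S) by exact: measurableD.
have DSD : mu (D `&` S) = mu D.
  by rewrite [RHS](measureDI _ mD mS) -[RHS]/(mu (D `\` S) + _) DS0 add0e.
suff intDS : \int[mu]_(x in D) g x = \int[mu]_(x in D `&` S) g x.
  by rewrite /Av DSD intDS.
rewrite -[in LHS](setUIDK D S) integral_setU //; last 3 first.
- exact: measurableI.
- by rewrite setUIDK.
- by rewrite /disj_set setDE setIACA setICr setI0.
by rewrite (null_set_integral mDS) ?adde0 //; apply: measurable_funS mg => // x [].
Qed.

Lemma le_Av_integral D g (a : R) : measurable D -> measurable_fun D g ->
  (forall x, D x -> 0 <= g x) -> (0 < a)%R -> mu D <= a%:E ->
  a^-1%:E * \int[mu]_(x in D) g x <= Av mu D g.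
Proof.
move=> mD mg g0 a0 Da; have [D0|D0] := eqVneq (mu D) 0.
  by rewrite null_set_integral // mule0 Av_ge0.
have Dpos : 0 < mu D by rewrite lt0e D0 measure_ge0.
have Dfin : mu D \is a fin_num by rewrite ge0_fin_numE ?(le_lt_trans Da) ?ltry.
rewrite /Av Dpos; apply: lee_wpmul2r; first exact: integral_ge0.
rewrite lee_fin lef_pV2 ?posrE ?fine_gt0 ?Dpos ?ltey_eq ?Dfin //.
by rewrite -lee_fin fineK.
Qed.

Lemma Av0 D : Av mu D (fun=> 0) = 0.
Proof. by rewrite /Av integral0 mule0; case: ifP. Qed.

Lemma Eosc_ge0 (f : T -> R) D : 0 <= Eosc mu f D.
Proof. by apply: le_ereal_inf_tmp => _ [c _ <-]; apply: Av_ge0. Qed.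

Lemma Eosc_le_Av (f : T -> R) D c : Eosc mu f D <= Av mu D (fun x => (`|f x - c|)%:E).
Proof. by apply: ereal_inf_lbound; exists c. Qed.

End average.

Section measurable_average.
Context {R : realType} {dsp : measure_display} {T : measurableType dsp}.
Variable mu : {measure set T -> \bar R}.
Local Open Scope ereal_scope.

Lemma integral_mfrestr D (mD : measurable D) (Doo : mu D < +oo) (g : T -> \bar R) :
  measurable_fun setT g -> \int[mfrestr mD Doo]_x g x = \int[mu]_(x in D) g x.
Proof.
move=> mg; have mCD : measurable (~` D) by exact: measurableC.
rewrite -(setUv D) integral_setU //; last 2 first.
- exact: measurable_funTS.
- by rewrite /disj_set setICr.
rewrite (@null_set_integral _ _ _ _ (~` D)) ?adde0 //; last 2 first.
- exact: measurable_funTS.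
- by rewrite -[LHS]/(mu (~` D `&` D)) setICl measure0.
by apply: eq_measure_integral => A mA AD; rewrite -[LHS]/(mu (A `&` D)) setIidl.
Qed.

Lemma measurable_Av_param D (h : T * T -> \bar R) : measurable D ->
  measurable_fun setT h -> (forall z, 0 <= h z) ->
  measurable_fun setT (fun x => Av mu D (fun y => h (x, y))).
Proof.
move=> mD mh h0; have [/andP[D0 Doo]|Ddeg] := boolP (0 < mu D < +oo); last first.
  by under eq_fun do rewrite Av_eq0 //; exact: measurable_cst.
rewrite /Av D0; apply: measurable_funeM.
have -> : (fun x => \int[mu]_(y in D) h (x, y)) = fubini_F (mfrestr mD Doo) h.
  apply/funext => x; rewrite /fubini_F integral_mfrestr //.
  exact: measurableT_comp mh (pair1_measurable x).
exact: measurable_fun_fubini_tonelli_F.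
Qed.

End measurable_average.

Section mean_dist.
Context {R : realType} {dsp : measure_display} {T : measurableType dsp}.
Implicit Types (mu nu : {measure set T -> \bar R}) (D G S : set T).
Local Open Scope ereal_scope.

Definition mean_dist mu nu D G (f : T -> R) : \bar R :=
  Av mu D (fun y => Av nu G (fun z => (`|f y - f z|)%:E)).

Variable f : T -> R.
Hypothesis mf : measurable_fun setT f.

Lemma measurable_dist_cst (c : R) : measurable_fun setT (fun x => (`|f x - c|)%:E).
Proof.
apply/measurable_EFinP/measurableT_comp; first exact: normr_measurable.
exact: measurable_funB.
Qed.

Lemma measurable_dist : measurable_fun setT (fun yz : T * T => (`|f yz.1 - f yz.2|)%:E).
Proof.
apply/measurable_EFinP/measurableT_comp; first exact: normr_measurable.
by apply: measurable_funB; exact: measurableT_comp.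
Qed.

Lemma measurable_Av_dist nu G : measurable G ->
  measurable_fun setT (fun y => Av nu G (fun z => (`|f y - f z|)%:E)).
Proof.
by move=> mG; apply: (measurable_Av_param _ mG measurable_dist) => yz; rewrite lee_fin.
Qed.

Lemma mean_dist_ge0 mu nu D G : 0 <= mean_dist mu nu D G f.
Proof. by apply: Av_ge0 => y _; apply: Av_ge0 => z _; rewrite lee_fin. Qed.

Lemma mean_dist_setI_null mu nu D G S S' :
  measurable D -> measurable G -> measurable S -> measurable S' ->
  mu (D `\` S) = 0 -> nu (G `\` S') = 0 ->
  mean_dist mu nu (D `&` S) (G `&` S') f = mean_dist mu nu D G f.
Proof.
move=> mD mG mS mS' DS0 GS0; rewrite /mean_dist.
have mdist_y y : measurable_fun G (fun z => (`|f y - f z|)%:E).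
  exact/measurable_funTS/(measurableT_comp measurable_dist (pair1_measurable y)).
under eq_fun do rewrite Av_setI_null //.
by rewrite Av_setI_null //; exact/measurable_funTS/measurable_Av_dist.
Qed.

(* Triangle inequality through an arbitrary constant [c]. *)
Lemma mean_dist_diag_le mu D :
  measurable D -> mean_dist mu mu D D f <= 2%:E * Eosc mu f D.
Proof.
move=> mD; have [/andP[D0 Doo]|Ddeg] := boolP (0 < mu D < +oo); last first.
  by rewrite /mean_dist Av_eq0 // mule_ge0 ?Eosc_ge0.
rewrite -lee_pdivrMl //; apply: le_ereal_inf_tmp => _ [c _ <-]; rewrite lee_pdivrMl //.
set P := Av mu D (fun x => (`|f x - c|)%:E).
have mfc : measurable_fun D (fun x => (`|f x - c|)%:E).
  exact/measurable_funTS/measurable_dist_cst.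
have P0 : 0 <= P by apply: Av_ge0 => x _; rewrite lee_fin.
have D_pos_fin : 0 < mu D < +oo by rewrite D0 Doo.
pose h := cst P \+ fun y => (`|f y - c|)%:E.
have dist_le y : Av mu D (fun z => (`|f y - f z|)%:E) <= h y.
  rewrite /h /= -[X in _ + X](Av_cst _ mD D_pos_fin) -AvD //; last first.
    by move=> z _; rewrite lee_fin.
  apply: Av_le => //.
  - exact/measurable_funTS/(measurableT_comp measurable_dist (pair1_measurable y)).
  - by apply: emeasurable_funD => //; exact: measurable_cst.
  move=> z _; rewrite /= -EFinD lee_fin (distrC (f z)).
  by rewrite [X in (_ <= X)%R]addrC ler_distD.
apply: (@le_trans _ _ (Av mu D h)).
  apply: (Av_le _ mD _ _ _ (fun y _ => dist_le y)).
  - exact/measurable_funTS/measurable_Av_dist.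
  - by apply: emeasurable_funD => //; exact: measurable_cst.
  - by move=> y _; apply: Av_ge0 => z _; rewrite lee_fin.
by rewrite AvD // Av_cst // mule_natl mule2n.
Qed.

End mean_dist.

Section weighted_sum.
Context {R : realType} {dsp : measure_display} {T : measurableType dsp}.
Variables (n : nat) (nus : 'I_n -> {measure set T -> \bar R}) (w : 'I_n -> R).
Variable m : {measure set T -> \bar R}.
Hypothesis w_gt0 : forall i, 0 < w i.
Hypothesis mE : forall A, measurable A -> m A = (\sum_(i < n) (w i)%:E * nus i A)%E.
Implicit Types (D : set T) (g : T -> \bar R).
Local Open Scope ereal_scope.

Lemma ge0_integral_wsum D g : measurable D -> (forall x, D x -> 0 <= g x) ->
  measurable_fun D g ->
  \int[m]_(x in D) g x = \sum_(i < n) (w i)%:E * \int[nus i]_(x in D) g x.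
Proof.
move=> mD g0 mg; case: n nus w w_gt0 mE => [|k] nus' w' w'_gt0 mE'.
  rewrite big_ord0 (eq_measure_integral (@mzero _ T R)); last first.
    by move=> A mA _; rewrite mE' // big_ord0.
  by rewrite integral_measure_zero.
pose m_ (j : nat) := mscale (NngNum (ltW (w'_gt0 (inord j)))) (nus' (inord j)).
rewrite (eq_measure_integral (msum m_ k.+1)); last first.
  move=> A mA _; rewrite mE' //= /msum; apply: eq_bigr => i _.
  by rewrite /m_ /mscale /= inord_val.
rewrite ge0_integral_measure_sum //; apply: eq_bigr => i _.
by rewrite /m_ ge0_integral_mscale //= inord_val.
Qed.

Lemma wsum_term_le i D : measurable D -> (w i)%:E * nus i D <= m D.
Proof.
move=> mD; rewrite (mE mD) (bigD1 i) //= leeDl // sume_ge0 // => j _.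
by rewrite mule_ge0 ?lee_fin ?(ltW (w_gt0 j)).
Qed.

Lemma wsum_gt0 D : measurable D -> 0 < m D -> exists i, 0 < nus i D.
Proof.
move=> mD; apply: contraPP => /forallNP nus0; rewrite (mE mD) big1 ?ltxx // => i _.
by move: (measure_ge0 (nus i) D); rewrite le_eqVlt => /predU1P[<-|/nus0]; rewrite ?mule0.
Qed.

Lemma Av_wsum_le D g : measurable D -> measurable_fun D g ->
  (forall x, D x -> 0 <= g x) -> Av m D g <= \sum_(i < n) Av (nus i) D g.
Proof.
move=> mD mg g0; have [MD|Mdeg] := boolP (0 < m D < +oo); last first.
  by rewrite Av_eq0 // sume_ge0 // => i _; exact: Av_ge0.
set M := fine (m D); have M_gt0 : (0 < M)%R := fine_gt0 MD.
have ME : M%:E = m D by rewrite fineK // ge0_fin_numE ?measure_ge0 //; case/andP: MD.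
rewrite {1}/Av (andP MD).1 ge0_integral_wsum // ge0_sume_distrr => [|i _]; last first.
  by rewrite mule_ge0 ?lee_fin ?(ltW (w_gt0 i)) ?integral_ge0.
apply: lee_sum => i _; rewrite muleA -EFinM.
have -> : (M^-1 * w i = ((w i)^-1 * M)^-1)%R by rewrite invfM invrK mulrC.
apply: le_Av_integral => //; first by rewrite mulr_gt0 ?invr_gt0.
by rewrite EFinM lee_pdivlMl // ME wsum_term_le.
Qed.

Lemma Eosc_wsum_le_mean_dist i0 D f : measurable D -> measurable_fun setT f ->
  0 < nus i0 D < +oo -> Eosc m f D <= \sum_(i < n) mean_dist (nus i0) (nus i) D D f.
Proof.
move=> mD mf D0.
have pointwise y :
    Eosc m f D <= \sum_(i < n) Av (nus i) D (fun z => (`|f y - f z|)%:E).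
  under eq_bigr do under eq_fun do rewrite distrC.
  apply: le_trans (Eosc_le_Av m f D (f y)) (Av_wsum_le _ _ _) => //.
  - exact/measurable_funTS/measurable_dist_cst.
rewrite -(Av_cst (Eosc m f D) mD D0) /mean_dist -Av_sum //; last 2 first.
- by move=> i; exact/measurable_funTS/measurable_Av_dist.
- by move=> i y _; apply: Av_ge0 => z _; rewrite lee_fin.
apply: (Av_le _ mD _ _ _ (fun y _ => pointwise y)) => //.
- by apply: emeasurable_sum => i; exact/measurable_funTS/measurable_Av_dist.
- by move=> y _; exact: Eosc_ge0.
Qed.

Lemma Eosc_wsum_le (I : {set 'I_n}) D f : measurable D -> measurable_fun setT f ->
  (forall j, j \notin I -> nus j D = 0) ->
  Eosc m f D <= 2%:E * (\sum_(i in I) Eosc (nus i) f D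
    + \sum_(i in I) \sum_(j in I | j != i) mean_dist (nus i) (nus j) D D f).
Proof.
move=> mD mf nusI.
have Eosc_sum_ge0 : 0 <= \sum_(i in I) Eosc (nus i) f D.
  by apply: sume_ge0 => i _; exact: Eosc_ge0.
pose cross := \sum_(i in I) \sum_(j in I | j != i) mean_dist (nus i) (nus j) D D f.
have cross_ge0 : 0 <= cross.
  by apply: sume_ge0 => i _; apply: sume_ge0 => j _; exact: mean_dist_ge0.
have [MD|Mdeg] := boolP (0 < m D < +oo); last first.
  by apply: le_trans (Eosc_le_Av m f D 0) _; rewrite Av_eq0 // mule_ge0 ?adde_ge0.
have [i0 nus_i0_gt0] := wsum_gt0 mD (andP MD).1.
have i0I : i0 \in I by apply: contraT => /nusI nus0; rewrite nus0 ltxx in nus_i0_gt0.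
have nus_i0_pos_fin : 0 < nus i0 D < +oo.
  rewrite nus_i0_gt0 ltey /=; apply: contraTneq (andP MD).2 => nus_i0_oo.
  rewrite -leNgt -[X in X <= _](@gt0_muley _ (w i0)%:E) ?lte_fin //.
  by rewrite -nus_i0_oo wsum_term_le.
apply: le_trans (Eosc_wsum_le_mean_dist mD mf nus_i0_pos_fin) _.
rewrite (bigD1 i0) //= (bigID (mem I)) /= [X in _ + (_ + X)]big1 ?adde0; last first.
  move=> j /andP[_ jI]; rewrite /mean_dist.
  by under eq_fun do rewrite Av_eq0 ?nusI ?ltxx //; exact: Av0.
rewrite ge0_muleDr //; apply: leeD.
  apply: le_trans (mean_dist_diag_le mf _ mD) _; apply: lee_wpmul2l => //.
  by rewrite (bigD1 i0) //= leeDl // sume_ge0 // => i _; exact: Eosc_ge0.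
apply: le_trans (_ : _ <= cross) _.
  rewrite [X in _ <= X](bigD1 i0) //= (eq_bigl (fun j => (j \in I) && (j != i0))).
    by rewrite leeDl // sume_ge0 // => i _; apply: sume_ge0 => j _; exact: mean_dist_ge0.
  by move=> j; rewrite andbC.
by rewrite mule_natl mule2n leeDl.
Qed.

Lemma Eosc_wsum_le_strata (I : {set 'I_n}) (S : 'I_n -> set T) D f :
  measurable D -> (forall i, measurable (S i)) -> measurable_fun setT f ->
  (forall i A, measurable A -> A `&` S i = set0 -> nus i A = 0) ->
  (forall j, j \notin I -> D `&` S j = set0) ->
  Eosc m f D <= 2%:E * (\sum_(i in I) Eosc (nus i) f D
    + \sum_(i in I) \sum_(j in I | j != i)
        mean_dist (nus i) (nus j) (D `&` S i) (D `&` S j) f).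
Proof.
move=> mD mS mf nus_off_S DS_disj.
have nus_DS0 i : nus i (D `\` S i) = 0.
  by apply: nus_off_S; [exact: measurableD | rewrite setDE -setIA setICl setI0].
under [X in _ + X]eq_bigr do under eq_bigr do rewrite mean_dist_setI_null //.
by apply: Eosc_wsum_le => // j /DS_disj; exact: nus_off_S.
Qed.

End weighted_sum.

Theorem lemma3p6 (R : realType) (dsp : measure_display) (T : measurableType dsp)
  (dist : T -> T -> R) (mu : {measure set T -> \bar R}) (p : R)
  (Hmet : is_metric dist) (Hcomplete : complete_metric dist)
  (Hsep : separable_metric dist) (Hborel : borel_structure dist)
  (Hlocfin : locally_finite dist mu) (Hsupp : full_support dist mu)
  (Hdoub : unif_loc_doubling dist mu)
  (Hp : 1 < p) (HPI : local_poincare dist mu p)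
  (thlow th : R) (N : nat) (ths : 'I_N -> R) (S : 'I_N -> set T)
  (nu : 'I_N -> {measure set T -> \bar R}) (m : nat -> {measure set T -> \bar R}) :
  0 <= thlow -> thlow < p -> (thlow%:E < Qlow dist mu)%E ->
  thlow <= th -> th < p ->
  (2 <= N)%N ->
  (forall i, 0 <= ths i) ->
  (forall i j : 'I_N, (i < j)%N -> ths i < ths j) ->
  (forall i : 'I_N, val i = N.-1 -> ths i = thlow) ->
  (forall i, ADR dist mu (ths i) (S i)) ->
  (* nu i = H_{theta_i} restricted to S^i (as a Borel measure) *)
  (forall i A, measurable A -> nu i A = Haus dist mu (ths i) (A `&` S i)) ->
  (* m k = sum_i 2^{k (theta - theta_i)} H_{theta_i} restricted to S^i *)
  (forall (k : nat) A, measurable A ->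
     m k A = (\sum_(i < N) ((2 `^ (k%:R * (th - ths i)))%:E * nu i A))%E) ->
  forall c : R, 1 <= c ->
  exists C : R, 0 < C /\
  forall (k : nat) (xu : T) (I : {set 'I_N}),
    (forall i, i \in I ->
       exists xi, S i xi /\ cball dist xi (2 ^- k) `<=` cball dist xu (c * 2 ^- k)) ->
    (forall j, j \notin I -> cball dist xu (c * 2 ^- k) `&` S j = set0) ->
    forall f : T -> R, loc_integrable dist (m 0%N) f ->
    let B := cball dist xu (c * 2 ^- k) in
    (Eosc (m k) f B <=
      C%:E * (\sum_(i in I) Eosc (nu i) f B
        + \sum_(i in I) \sum_(j in I | j != i)
            Av (nu i) (B `&` S i)
               (fun y => Av (nu j) (B `&` S j) (fun z => (`|f y - f z|)%:E))))%E.
Proof.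
move=> _ _ _ _ _ _ _ _ _ ADR_S nuE mE c _; exists 2; split => //.
move=> k xu I _ off_I f [mf _] /=.
set B := cball dist xu (c * 2 ^- k).
have mB : measurable B by apply: d_closed_measurable Hborel _; exact: cball_d_closed.
have mS i : measurable (S i) by apply: d_closed_measurable Hborel _; exact: (ADR_S i).1.
have nu_off_S i A : measurable A -> A `&` S i = set0 -> nu i A = 0%E.
  move=> mA AS0; apply/eqP; rewrite eq_le measure_ge0 andbT nuE // AS0.
  exact: Haus_set0_le0.
have w_gt0 i : 0 < 2 `^ (k%:R * (th - ths i)) by apply: powR_gt0.
exact: (Eosc_wsum_le_strata w_gt0 (mE k) mB mS mf nu_off_S off_I).
Qed.
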